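(* Let $A=(a_{ij}), B=(b_{ij})\in\mathbb{R}^{n\times n}_+$ be Schur-stable extended Leslie matrices, i.e. entrywise nonnegative matrices whose only possibly nonzero entries are those in the first row, the subdiagonal entries $(i,i-1)$ for $2\le i\le n$, and the $(n,n)$ entry. Let $\mathcal{L}_{A,B}$ be the set of entrywise nonnegative matrices $D\in\mathbb{R}^{n\times n}$ whose only possibly nonzero entries are the subdiagonal entries $d_{i,i-1}$ ($2\le i\le n$) and the entry $d_{nn}$, and such that $A-D\ge 0$ and $B-D\ge 0$ entrywise. Let $\mathcal{L}^1_{A,B}$ be the set of those $D\in\mathcal{L}_{A,B}$ that have only one non-zero row (all other rows zero). Then for every $D\in\mathcal{L}^1_{A,B}$ the matrix $$M=\begin{pmatrix} A-D & D\\ D & B-D\end{pmatrix}$$ is Schur-stable.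
   Context: A real square matrix is Schur-stable if its spectral radius is strictly less than $1$. $\mathbb{R}^{n\times n}_+$ denotes the set of entrywise nonnegative $n\times n$ real matrices; inequalities between matrices are entrywise. *)

From HB Require Import structures.
From mathcomp Require Import all_boot all_order all_algebra.
From mathcomp Require Import complex.
From mathcomp Require Import reals.
Set Implicit Arguments. Unset Strict Implicit. Unset Printing Implicit Defensive.
Import Order.TTheory GRing.Theory Num.Theory.
Local Open Scope ring_scope.

Definition ceigen (R : rcfType) (n : nat) (A : 'M[R]_n) (z : R[i]) : bool :=
  root (map_poly (fun x : R => (x%:C)%C) (char_poly A)) z.

Definition schur_stable (R : rcfType) (n : nat) (A : 'M[R]_n) : Prop :=
  forall z : R[i], ceigen A z -> `|z| < 1.

Definition nonneg_mx (R : realDomainType) (m n : nat) (A : 'M[R]_(m, n)) : Prop :=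
  forall i j, 0 <= A i j.

(* Indices are 0-based: row 1 is index 0, entry (i,i-1) is (i, j) with i = j+1,
   and entry (n,n) is (n-1, n-1). *)
Definition ext_leslie_pos (n : nat) (i j : 'I_n) : bool :=
  [|| val i == 0%N, val i == (val j).+1 | (val i == n.-1) && (val j == n.-1)].

Definition ext_leslie (R : realDomainType) (n : nat) (A : 'M[R]_n) : Prop :=
  nonneg_mx A /\ forall i j, ~~ ext_leslie_pos i j -> A i j = 0.

Definition subdiag_nn_pos (n : nat) (i j : 'I_n) : bool :=
  (val i == (val j).+1) || ((val i == n.-1) && (val j == n.-1)).

Definition LAB (R : realDomainType) (n : nat) (A B D : 'M[R]_n) : Prop :=
  [/\ nonneg_mx D,
      (forall i j, ~~ subdiag_nn_pos i j -> D i j = 0),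
      nonneg_mx (A - D) & nonneg_mx (B - D)].

Definition LAB1 (R : realDomainType) (n : nat) (A B D : 'M[R]_n) : Prop :=
  LAB A B D /\ exists k : 'I_n, row k D != 0 /\ forall i, i != k -> row i D = 0.

From HB Require Import structures.
From mathcomp Require Import all_boot all_order all_algebra.
From mathcomp Require Import complex polyrcf.
From mathcomp Require Import reals.
From mathcomp Require Import ring.
Set Implicit Arguments. Unset Strict Implicit. Unset Printing Implicit Defensive.
Import Order.TTheory GRing.Theory Num.Theory.
Local Open Scope ring_scope.

(* A nonnegative matrix admitting a positive row vector v with v M < v
   entrywise is Schur-stable (Collatz-Wielandt). Conversely a Schur-stable
   extended Leslie matrix A admits such a vector: its characteristic
   polynomial q has no root in [1, +oo), hence q(1) > 0, and the explicit left
   "eigenvector" of A at 1, whose only defect is q(1), is corrected into a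
   strict one. Taking such vectors u for A and w for B, rescaled to agree at
   the index k of the nonzero row of D, (u, w) works for the block matrix,
   since the coupling terms (w - u) D and (u - w) D vanish. *)

Definition copositive_lyapunov (R : numDomainType) n (M : 'M[R]_n)
    (v : 'rV[R]_n) :=
  (forall j, 0 < v 0 j) /\ (forall j, (v *m M) 0 j < v 0 j).

Lemma char_poly_trmx (R : comNzRingType) n (A : 'M[R]_n) :
  char_poly A^T = char_poly A.
Proof.
rewrite /char_poly -det_tr; congr (\det _).
by apply/matrixP => i j; rewrite !mxE eq_sym.
Qed.

Lemma ceigen_eigenvalue (R : rcfType) n (A : 'M[R]_n) x :
  eigenvalue A x -> ceigen A (x%:C)%C.
Proof.
by rewrite eigenvalue_root_char /ceigen (fmorph_root (real_complex R)).
Qed.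

Lemma schur_stable_eigenvalue_lt1 (R : rcfType) n (A : 'M[R]_n) x :
  schur_stable A -> eigenvalue A x -> 0 <= x -> x < 1.
Proof.
move=> A_stable /ceigen_eigenvalue/A_stable + x_ge0.
by rewrite ger0_norm ?ler0c // -(ltcR x 1).
Qed.

Lemma psumr_gt0 (R : numDomainType) (I : finType) (F : I -> R) i0 :
  (forall i, 0 <= F i) -> 0 < F i0 -> 0 < \sum_i F i.
Proof.
move=> F_ge0 Fi0_gt0; rewrite (bigD1 i0) //= ltr_pwDl //.
by apply: sumr_ge0 => i _.
Qed.

(* Collatz-Wielandt: if y is an eigenvector of M^T for z, then weighting
   |z| |y| <= M |y| by v shows |z| sum_j v_j |y_j| < sum_j v_j |y_j|. *)
Lemma schur_stable_of_copositive_lyapunov (R : rcfType) n (M : 'M[R]_n)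
    (v : 'rV[R]_n) :
  nonneg_mx M -> copositive_lyapunov M v -> schur_stable M.
Proof.
move=> M_ge0 [v_gt0 vM_lt] z.
rewrite /ceigen (map_char_poly (real_complex R)) -char_poly_trmx.
rewrite -eigenvalue_root_char => /eigenvalueP[y yM /rV0Pn[j0 yj0_neq0]].
have eigen_bound i : `|z| * `|y 0 i| <= \sum_j `|y 0 j| * ((M i j)%:C)%C.
  have -> : `|z| * `|y 0 i| = `|\sum_j y 0 j * ((M i j)%:C)%C|.
    rewrite -normrM; move/rowP: yM => /(_ i); rewrite !mxE => <-.
    by congr `|_|; apply: eq_bigr => j _; rewrite !mxE.
  apply: le_trans (ler_norm_sum _ _ _) _; apply: ler_sum => j _.
  by rewrite normrM (ger0_norm (x := ((M i j)%:C)%C)) ?ler0c.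
pose S := \sum_j ((v 0 j)%:C)%C * `|y 0 j|.
have S_gt0 : 0 < S.
  rewrite /S; apply: (psumr_gt0 (i0 := j0)) => [j|].
    by rewrite mulr_ge0 // ler0c ltW.
  by rewrite mulr_gt0 ?normr_gt0 // ltcR.
have le_S : `|z| * S <= \sum_j `|y 0 j| * (((v *m M) 0 j)%:C)%C.
  have -> : \sum_j `|y 0 j| * (((v *m M) 0 j)%:C)%C =
            \sum_i ((v 0 i)%:C)%C * \sum_j `|y 0 j| * ((M i j)%:C)%C.
    under [RHS]eq_bigr do rewrite mulr_sumr.
    rewrite exchange_big /=; apply: eq_bigr => j _.
    rewrite mxE rmorph_sum mulr_sumr; apply: eq_bigr => i _.
    by rewrite rmorphM mulrCA.
  rewrite mulr_sumr; apply: ler_sum => i _.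
  by rewrite mulrCA ler_wpM2l // ler0c ltW.
have lt_S : \sum_j `|y 0 j| * (((v *m M) 0 j)%:C)%C < S.
  rewrite -subr_gt0 -sumrB; apply: (psumr_gt0 (i0 := j0)) => [j|].
    by rewrite mulrC -mulrBr mulr_ge0 // subr_ge0 lecR ltW.
  by rewrite mulrC -mulrBr mulr_gt0 ?normr_gt0 // subr_gt0 ltcR.
by rewrite -(gtr_pMl _ S_gt0); apply: le_lt_trans lt_S.
Qed.

Lemma mulmx_col_support (R : pzSemiRingType) n (x : 'rV[R]_n) (A : 'M[R]_n)
    j i1 i2 :
  i1 != i2 -> (forall i, i != i1 -> i != i2 -> A i j = 0) ->
  (x *m A) 0 j = x 0 i1 * A i1 j + x 0 i2 * A i2 j.
Proof.
move=> i12 A_supp; rewrite mxE (bigD1 i1) //= (bigD1 i2) 1?eq_sym //=.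
by rewrite big1 ?addr0 // => i /andP[i1i i2i]; rewrite A_supp ?mulr0.
Qed.

Section LeslieAlgebra.
Variables (R : fieldType) (m : nat) (A : 'M[R]_m.+2).
Hypothesis A_pattern : forall i j, ~~ ext_leslie_pos i j -> A i j = 0.
Local Notation N := m.+1.

Definition leslie_fecundity k := A 0 (inord k).
Definition leslie_survival k := A (inord k) (inord k.-1).
Definition leslie_corner := A ord_max ord_max.
Local Notation a := leslie_fecundity.
Local Notation s := leslie_survival.
Local Notation c := leslie_corner.

Lemma inord_max : inord N = ord_max :> 'I_N.+1.
Proof. by apply/val_inj; rewrite /= inordK. Qed.

Lemma inord_eq0 k : (k <= N)%N -> (inord k == 0 :> 'I_N.+1) = (k == 0%N).
Proof. by move=> le_kN; rewrite -(inj_eq val_inj) /= inordK. Qed.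

Lemma mulmx_leslie_col (x : 'rV[R]_m.+2) k : (k < N)%N ->
  (x *m A) 0 (inord k) = x 0 0 * a k + x 0 (inord k.+1) * s k.+1.
Proof.
move=> lt_kN; rewrite (mulmx_col_support _ (i1 := 0) (i2 := inord k.+1)).
- by rewrite /leslie_survival.
- by rewrite -(inj_eq val_inj) /= inordK.
move=> i i_neq0 i_neq; apply: A_pattern.
rewrite /ext_leslie_pos /= inordK 1?ltnW //.
move: i_neq0 i_neq; rewrite -!(inj_eq val_inj) /= inordK //.
by move=> /negPf -> /negPf ->; rewrite (ltn_eqF lt_kN) andbF.
Qed.

Lemma mulmx_leslie_col_max (x : 'rV[R]_m.+2) :
  (x *m A) 0 ord_max = x 0 0 * a N + x 0 ord_max * c.
Proof.
rewrite (mulmx_col_support _ (i1 := 0) (i2 := ord_max)).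
- by rewrite /leslie_fecundity inord_max.
- by rewrite -(inj_eq val_inj).
move=> i i_neq0 i_neq; apply: A_pattern; rewrite /ext_leslie_pos /=.
move: i_neq0 i_neq; rewrite -!(inj_eq val_inj) /= => /negPf -> /negPf ->.
by rewrite (ltn_eqF (ltn_ord i)).
Qed.

(* leslie_vec x solves columns N, N-1, ..., 1 of v A = x v by
   back-substitution; the defect left in column 0 is x q(x), so q is the
   characteristic polynomial of A. *)
Fixpoint leslie_tailp k : {poly R} :=
  if k is k'.+1 then
    a (N - k) *: (('X - c%:P) * 'X^k') + s (N - k') *: leslie_tailp k'
  else (a N)%:P.

Definition leslie_poly := ('X - c%:P) * 'X^N - leslie_tailp N.

Definition leslie_vec x : 'rV[R]_m.+2 := \row_j
  if j == 0%N :> nat then (x - c) * x ^+ N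
  else (leslie_tailp (N - j)).[x] * x ^+ j.

Lemma horner_leslie_tailpS k x : (leslie_tailp k.+1).[x] =
  a (N - k.+1) * ((x - c) * x ^+ k) + s (N - k) * (leslie_tailp k).[x].
Proof. by rewrite /= !hornerE. Qed.

Lemma horner_leslie_poly x :
  leslie_poly.[x] = (x - c) * x ^+ N - (leslie_tailp N).[x].
Proof. by rewrite /leslie_poly hornerD hornerN hornerM hornerXsubC hornerXn. Qed.

Lemma leslie_vecE x k : (k <= N)%N -> leslie_vec x 0 (inord k) =
  if k == 0%N then (x - c) * x ^+ N else (leslie_tailp (N - k)).[x] * x ^+ k.
Proof. by move=> le_kN; rewrite mxE /= !inordK. Qed.

Lemma leslie_vec0 x : leslie_vec x 0 0 = (x - c) * x ^+ N.
Proof. by rewrite mxE. Qed.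

Lemma leslie_vec_mulmx x :
  leslie_vec x *m A = x *: leslie_vec x - (x * leslie_poly.[x]) *: delta_mx 0 0.
Proof.
apply/rowP => j; rewrite -[j]inord_val; move: (val j) (ltn_ord j) => k.
rewrite ltnS => le_kN; rewrite ![in RHS]mxE eqxx inord_eq0 // !inordK //=.
move: le_kN; rewrite leq_eqVlt => /orP[/eqP->|lt_kN].
  rewrite inord_max mulmx_leslie_col_max -inord_max !leslie_vecE //=.
  by rewrite leslie_vec0 subnn /= hornerC; ring.
rewrite mulmx_leslie_col // leslie_vec0 (leslie_vecE _ lt_kN) /=.
case: eqVneq => [-> | _] /=.
  rewrite horner_leslie_poly subn1 /= horner_leslie_tailpS subnn subSnn.
  by rewrite exprS; ring.
rewrite -(subnSK lt_kN) horner_leslie_tailpS (subnSK lt_kN).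
rewrite !subKn ?(ltnW lt_kN) //.
have -> : x ^+ N = x ^+ (N - k.+1) * x ^+ k.+1 by rewrite -exprD subnK.
by rewrite exprS; ring.
Qed.

Lemma size_leslie_tailp k : (size (leslie_tailp k) <= k.+1)%N.
Proof.
elim: k => [|k IHk] /=; first by rewrite size_polyC leq_b1.
apply: leq_trans (size_polyD _ _) _; rewrite geq_max; apply/andP; split.
  apply: leq_trans (size_scale_leq _ _) _.
  by rewrite size_Mmonic ?monicXn ?polyXsubC_eq0 // size_polyXn size_XsubC.
by apply: leq_trans (size_scale_leq _ _) _; apply: leq_trans IHk _.
Qed.

Lemma lead_coef_leslie_poly : lead_coef leslie_poly = 1.
Proof.
have size_XcXN : size (('X - c%:P) * 'X^N) = N.+2.
  by rewrite size_Mmonic ?monicXn ?polyXsubC_eq0 // size_polyXn size_XsubC.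
rewrite lead_coefDl; first by rewrite lead_coef_Mmonic ?monicXn ?lead_coefXsubC.
by rewrite size_polyN size_XcXN ltnS size_leslie_tailp.
Qed.

Lemma leslie_corner_eigenvalue : a N = 0 -> eigenvalue A c.
Proof.
move=> aN0; rewrite eigenvalue_root_char -char_poly_trmx -eigenvalue_root_char.
apply/eigenvalueP; exists (delta_mx 0 ord_max); last first.
  by apply/rV0Pn; exists ord_max; rewrite mxE !eqxx oner_eq0.
apply/rowP => j; rewrite -rowE !mxE.
have [->|j_neq] := eqVneq j ord_max; first by rewrite eqxx mulr1.
rewrite andbF mulr0.
have [->|j_neq0] := eqVneq j 0; first by rewrite -aN0 /leslie_fecundity inord_max.
apply: A_pattern; rewrite /ext_leslie_pos /=.
move: j_neq0 j_neq; rewrite -!(inj_eq val_inj) /= => /negPf -> /negPf ->.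
by rewrite (ltn_eqF (ltn_ord j)).
Qed.

Lemma leslie_root_eigenvalue x : x != 0 -> root leslie_poly x -> eigenvalue A x.
Proof.
move=> x_neq0 /rootP q_x0.
have vecA : leslie_vec x *m A = x *: leslie_vec x.
  by rewrite leslie_vec_mulmx q_x0 mulr0 scale0r subr0.
have [x_c|x_neq_c] := eqVneq x c.
  have [aN0|aN_neq0] := eqVneq (a N) 0.
    by rewrite x_c; apply: leslie_corner_eigenvalue.
  apply/eigenvalueP; exists (leslie_vec x) => //; apply/rV0Pn; exists ord_max.
  rewrite -inord_max leslie_vecE //= subnn hornerC.
  by rewrite mulf_neq0 // expf_neq0.
apply/eigenvalueP; exists (leslie_vec x) => //; apply/rV0Pn; exists 0.
by rewrite leslie_vec0 mulf_neq0 ?expf_neq0 ?subr_eq0.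
Qed.

Fixpoint leslie_slack k : R :=
  if k is k'.+1 then 1 + s (N - k') * leslie_slack k' else (1 - c)^-1.

Definition leslie_slack_vec : 'rV[R]_m.+2 :=
  \row_j if j == 0%N :> nat then 0 else leslie_slack (N - j).

Lemma leslie_slack_vec_mulmx : c != 1 ->
  leslie_slack_vec *m A =
  leslie_slack_vec - const_mx 1 + (1 + s 1 * leslie_slack m) *: delta_mx 0 0.
Proof.
move=> c_neq1; have one_c_neq0 : 1 - c != 0 by rewrite subr_eq0 eq_sym.
apply/rowP => j; rewrite -[j]inord_val; move: (val j) (ltn_ord j) => k.
rewrite ltnS => le_kN; rewrite ![in RHS]mxE eqxx inord_eq0 // !inordK //=.
move: le_kN; rewrite leq_eqVlt => /orP[/eqP->|lt_kN].
  rewrite inord_max mulmx_leslie_col_max !mxE /= subnn mul0r add0r /=.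
  by field.
rewrite mulmx_leslie_col // !mxE /= !inordK // mul0r add0r.
case: (eqVneq k 0%N) => [->|_] /=; first by rewrite subn1 /=; ring.
by rewrite -(subnSK lt_kN) /= subKn //; ring.
Qed.

End LeslieAlgebra.

Section LeslieStable.
Variables (R : rcfType) (m : nat) (A : 'M[R]_m.+2).
Hypotheses (A_leslie : ext_leslie A) (A_stable : schur_stable A).
Local Notation s := (leslie_survival A).
Local Notation c := (leslie_corner A).
Local Notation q := (leslie_poly A).

Let A_ge0 : nonneg_mx A. Proof. by case: A_leslie. Qed.
Let A_pattern : forall i j, ~~ ext_leslie_pos i j -> A i j = 0.
Proof. by case: A_leslie. Qed.

Lemma leslie_tailp_ge0 k x : c <= x -> 0 <= (leslie_tailp A k).[x].
Proof.
move=> c_le_x; have x_ge0 : 0 <= x by apply: le_trans (A_ge0 _ _) c_le_x.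
elim: k => [|k IHk]; first by rewrite /= hornerC A_ge0.
by rewrite horner_leslie_tailpS addr_ge0 ?mulr_ge0 ?exprn_ge0 ?subr_ge0 //;
  apply: A_ge0.
Qed.

(* A root x >= 1 of q would be an eigenvalue of A; as q is monic, the
   intermediate value theorem then forces q > 0 on [1, +oo). *)
Lemma leslie_poly_gt0 x : 1 <= x -> 0 < q.[x].
Proof.
move=> x_ge1; rewrite ltNge; apply/negP => qx_le0.
have := poly_pinfty_gt_lc (p := q); rewrite lead_coef_leslie_poly.
case/(_ ltr01) => b q_ge1.
have x_le_y : x <= Num.max x b by rewrite le_max lexx.
have q_sign : q.[x] <= 0 <= q.[Num.max x b].
  by rewrite qx_le0 (le_trans ler01) // q_ge1 // le_max lexx orbT.
have [z /andP[x_le_z _] q_z0] := poly_ivt x_le_y q_sign.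
have z_ge1 : 1 <= z := le_trans x_ge1 x_le_z.
have z_eigen : eigenvalue A z.
  apply: (leslie_root_eigenvalue A_pattern) q_z0.
  by rewrite gt_eqF // (lt_le_trans ltr01).
have := schur_stable_eigenvalue_lt1 A_stable z_eigen (le_trans ler01 z_ge1).
by rewrite ltNge z_ge1.
Qed.

Lemma leslie_corner_lt1 : c < 1.
Proof.
rewrite ltNge; apply/negP => c_ge1.
have := leslie_poly_gt0 c_ge1.
by rewrite horner_leslie_poly subrr mul0r sub0r oppr_gt0 ltNge leslie_tailp_ge0.
Qed.

Lemma leslie_slack_gt0 k : 0 < leslie_slack A k.
Proof.
elim: k => [|k IHk] /=; first by rewrite invr_gt0 subr_gt0 leslie_corner_lt1.
by rewrite ltr_pwDl // mulr_ge0 ?(ltW IHk) //; apply: A_ge0.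
Qed.

(* Perturbing leslie_vec A 1 (for which the only defect is q(1) > 0 in the
   first coordinate) by the slack vector spreads that defect over all
   coordinates. *)
Lemma leslie_copositive_lyapunov : exists v, copositive_lyapunov A v.
Proof.
have c_lt1 := leslie_corner_lt1.
set Z := 1 + s 1 * leslie_slack A m.
have Z_gt0 : 0 < Z.
  by rewrite ltr_pwDl // mulr_ge0 ?(ltW (leslie_slack_gt0 _)) //; apply: A_ge0.
set eps := q.[1] / Z.
have eps_gt0 : 0 < eps by rewrite divr_gt0 // leslie_poly_gt0.
set v := leslie_vec A 1 + eps *: leslie_slack_vec A.
have vA : v *m A = v - eps *: const_mx 1.
  rewrite mulmxDl -scalemxAl (leslie_vec_mulmx A_pattern).
  rewrite (leslie_slack_vec_mulmx A_pattern) ?lt_eqF //.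
  apply/rowP => j; rewrite !mxE -/Z /eps; field.
  by rewrite gt_eqF.
exists v; split => j.
  rewrite /v /leslie_vec /leslie_slack_vec !mxE !expr1n !mulr1.
  case: eqP => _; first by rewrite mulr0 addr0 subr_gt0.
  apply: ltr_wpDl; first exact/leslie_tailp_ge0/ltW.
  exact: mulr_gt0 eps_gt0 (leslie_slack_gt0 _).
by rewrite vA !mxE mulr1 gtrBl.
Qed.

End LeslieStable.

Lemma ext_leslie_copositive_lyapunov (R : rcfType) n (A : 'M[R]_n) :
  ext_leslie A -> schur_stable A -> exists v, copositive_lyapunov A v.
Proof.
case: n A => [|[|m]] A A_leslie A_stable; last exact: leslie_copositive_lyapunov.
  by exists 0; split; case.
have A00_ge0 : 0 <= A 0 0 by case: A_leslie.
have A_eigen : eigenvalue A (A 0 0).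
  apply/eigenvalueP; exists (const_mx 1).
    by apply/rowP => j; rewrite ord1 !mxE big_ord1 !mxE mul1r mulr1.
  by apply/rV0Pn; exists 0; rewrite mxE oner_eq0.
have A00_lt1 := schur_stable_eigenvalue_lt1 A_stable A_eigen A00_ge0.
by exists (const_mx 1); split => j; rewrite ord1 !mxE ?big_ord1 ?mxE ?mul1r.
Qed.

Lemma copositive_lyapunovZ (R : numDomainType) n (M : 'M[R]_n) v a :
  0 < a -> copositive_lyapunov M v -> copositive_lyapunov M (a *: v).
Proof.
move=> a_gt0 [v_gt0 vM_lt]; split => j; first by rewrite mxE mulr_gt0.
by move: (vM_lt j); rewrite -scalemxAl !mxE ltr_pM2l.
Qed.

Lemma copositive_lyapunov_row_mx (R : numDomainType) n1 n2
    (M : 'M[R]_(n1 + n2)) (A : 'M_n1) (B : 'M_n2) u w :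
  row_mx u w *m M = row_mx (u *m A) (w *m B) ->
  copositive_lyapunov A u -> copositive_lyapunov B w ->
  copositive_lyapunov M (row_mx u w).
Proof.
move=> uwM [u_gt0 uA_lt] [w_gt0 wB_lt]; rewrite /copositive_lyapunov uwM.
by split=> j; case: (split_ordP j) => j' ->; rewrite ?row_mxEl ?row_mxEr.
Qed.

Lemma nonneg_block_mx (R : realDomainType) m1 m2 n1 n2 (Aul : 'M[R]_(m1, n1))
    (Aur : 'M_(m1, n2)) (Adl : 'M_(m2, n1)) (Adr : 'M_(m2, n2)) :
  nonneg_mx Aul -> nonneg_mx Aur -> nonneg_mx Adl -> nonneg_mx Adr ->
  nonneg_mx (block_mx Aul Aur Adl Adr).
Proof.
move=> ul_ge0 ur_ge0 dl_ge0 dr_ge0 i j.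
case: (split_ordP i) => i' ->; case: (split_ordP j) => j' ->.
- by rewrite block_mxEul.
- by rewrite block_mxEur.
- by rewrite block_mxEdl.
- by rewrite block_mxEdr.
Qed.

Lemma mulmx_single_row (R : pzSemiRingType) n p (D : 'M[R]_(n, p)) k
    (x : 'rV[R]_n) :
  (forall i, i != k -> row i D = 0) -> x 0 k = 0 -> x *m D = 0.
Proof.
move=> D_rows xk0; apply/rowP => j; rewrite !mxE big1 // => i _.
have [->|i_neq] := eqVneq i k; first by rewrite xk0 mul0r.
by move/rowP/(_ j): (D_rows i i_neq); rewrite !mxE => ->; rewrite mulr0.
Qed.

Lemma mul_row_block_coupled (R : pzRingType) n (A B D : 'M[R]_n)
    (u w : 'rV_n) k :
  (forall i, i != k -> row i D = 0) -> u 0 k = w 0 k ->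
  row_mx u w *m block_mx (A - D) D D (B - D) = row_mx (u *m A) (w *m B).
Proof.
move=> D_rows uw_k; rewrite mul_row_block.
have wuD : (w - u) *m D = 0.
  by apply: mulmx_single_row D_rows _; rewrite !mxE uw_k subrr.
have uwD : (u - w) *m D = 0.
  by apply: mulmx_single_row D_rows _; rewrite !mxE uw_k subrr.
by rewrite !mulmxBr addrAC -addrA -mulmxBl wuD addrCA -mulmxBl uwD !addr0.
Qed.

Theorem theorem4 (R : realType) (n : nat) (A B : 'M[R]_n) :
  ext_leslie A -> ext_leslie B -> schur_stable A -> schur_stable B ->
  forall D : 'M[R]_n, LAB1 A B D ->
    schur_stable (block_mx (A - D) D D (B - D)).
Proof.
move=> A_leslie B_leslie A_stable B_stable D.
case=> -[D_ge0 _ AD_ge0 BD_ge0] [k [_ D_rows]].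
have [u uA] := ext_leslie_copositive_lyapunov A_leslie A_stable.
have [w wB] := ext_leslie_copositive_lyapunov B_leslie B_stable.
have [u_gt0 _] := uA; have [w_gt0 _] := wB.
pose w' := (u 0 k / w 0 k) *: w.
have w'B : copositive_lyapunov B w'.
  by apply: copositive_lyapunovZ wB; rewrite divr_gt0.
have uw'_k : u 0 k = w' 0 k by rewrite mxE divfK // gt_eqF.
apply: (schur_stable_of_copositive_lyapunov (v := row_mx u w')).
  exact: nonneg_block_mx.
apply: copositive_lyapunov_row_mx uA w'B.
exact: mul_row_block_coupled D_rows uw'_k.
Qed.
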